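(* As formal power series in $z$, $$\sum_{n\ge0}\frac{r_n(s,q^2)}{(q;q)_n}z^n=\frac{e_q(sz)\,e_q(z)}{e_{q^2}(qsz^2)}.$$ Equivalently, for every integer $n\ge0$: (i) $r_n(s,q^2)=\sum_{j=0}^{\lfloor n/2\rfloor}(-1)^jq^{j^2}(q;q^2)_j\begin{bmatrix} n\\ 2j\end{bmatrix}_q s^j\,r_{n-2j}(s,q)$; (ii) $r_n(s,q^2)=\sum_{j=0}^{\lfloor n/2\rfloor}\begin{bmatrix} n\\ 2j\end{bmatrix}_q(q;q^2)_j(qs;q^2)_j\,s^{n-2j}\Big(-\frac1s;q\Big)_{n-2j}$; (iii) $\sum_{k=0}^{2n}(-1)^k(-s;q)_k\begin{bmatrix} 2n\\ k\end{bmatrix}_q r_{2n-k}(s,q^2)=(q;q^2)_n(qs;q^2)_n$ and $\sum_{k=0}^{2n+1}(-1)^k(-s;q)_k\begin{bmatrix} 2n+1\\ k\end{bmatrix}_q r_{2n+1-k}(s,q^2)=0$.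
   Context: $q$ is an indeterminate. $(x;q)_n=\prod_{j=0}^{n-1}(1-q^jx)$. The Gaussian binomial coefficient is $\begin{bmatrix} n\\ j\end{bmatrix}_q=\frac{(q;q)_n}{(q;q)_j(q;q)_{n-j}}$ for $0\le j\le n$ and $0$ otherwise. The Rogers–Szegö polynomials are $r_n(s,q)=\sum_{j=0}^n\begin{bmatrix} n\\ j\end{bmatrix}_q s^j$. $e_q(w)=\sum_{n\ge0}\frac{w^n}{(q;q)_n}$ as a formal power series, and $1/e_q(w)$ denotes its formal reciprocal. *)

From HB Require Import structures.
From mathcomp Require Import all_boot all_order all_algebra.
Set Implicit Arguments. Unset Strict Implicit. Unset Printing Implicit Defensive.
Import Order.TTheory GRing.Theory Num.Theory.
Local Open Scope ring_scope.

Section Defs.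
Variable R : fieldType.

Definition qpoch (x q : R) (n : nat) : R := \prod_(j < n) (1 - q ^+ j * x).

Definition qbinom (q : R) (n j : nat) : R :=
  if (j <= n)%N then qpoch q q n / (qpoch q q j * qpoch q q (n - j)) else 0.

Definition rs (n : nat) (s q : R) : R := \sum_(j < n.+1) qbinom q n j * s ^+ j.

(* formal power series in z, as coefficient sequences *)
Definition series := nat -> R.

Definition smul (a b : series) : series :=
  fun n => \sum_(k < n.+1) a k * b (n - k)%N.

(* e_q(w) = sum_n w^n/(q;q)_n, as a series in w *)
Definition eq_series (q : R) : series := fun n => (qpoch q q n)^-1.

(* substitution w := c z^d (d > 0) into a series f in w *)
Definition subst_mono (c : R) (d : nat) (f : series) : series :=
  fun n => if (d %| n)%N then c ^+ (n %/ d) * f (n %/ d)%N else 0.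

(* formal reciprocal (for a series with invertible constant term) *)
Fixpoint recip_seq (a : series) (n : nat) : seq R :=
  match n with
  | 0 => [:: (a 0%N)^-1]
  | n'.+1 => let s := recip_seq a n' in
      rcons s (- (a 0%N)^-1 * \sum_(k < n'.+1) a k.+1 * nth 0 s (n' - k)%N)
  end.
Definition recip (a : series) : series := fun n => nth 0 (recip_seq a n) n.

End Defs.

(* The indeterminates: K = Q(q, s) as the fraction field of Q[q][s] *)
Definition K : fieldType := {fraction {poly {poly rat}}}.
Definition qI : K := tofrac (('X : {poly rat})%:P).
Definition sI : K := tofrac ('X : {poly {poly rat}}).

From mathcomp Require Import all_boot all_algebra.
From mathcomp Require Import ring zify.
From Stdlib Require Import FunctionalExtensionality.
Import GRing.Theory.
Local Open Scope ring_scope.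
Set Implicit Arguments. Unset Strict Implicit.

(* Every series involved satisfies a first-order q-difference equation
   P(z) f(qz) = Q(z) f(z) with polynomials P, Q of constant term 1, and as q is not a
   root of unity such an equation determines f from f(0). The generating function
   F(z) = sum_n r_n(s,q^2) z^n / (q;q)_n satisfies
   (1 - q s z^2) F(qz) = (1 - z)(1 - s z) F(z), and multiplying the equations of
   e_q(sz), e_q(z), e_{q^2}(q s z^2)^{+-1} and of the q-binomial series
   U(z) = sum_j (qs;q^2)_j z^(2j) / (q^2;q^2)_j, T(z) = sum_n (-1/s;q)_n (sz)^n / (q;q)_n,
   A(z) = sum_n (-s;q)_n (-z)^n / (q;q)_n shows F e_{q^2}(q s z^2) = e_q(sz) e_q(z),
   F = U T and A F = U. *)

Lemma leq_double_ord_half n (j : 'I_n./2.+1) : (2 * j <= n)%N.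
Proof. by rewrite mul2n -geq_half_double -ltnS. Qed.

Section FormalSeries.
Variable R : fieldType.
Implicit Types (f g h P Q : series R) (x a c : R).

Definition series1 : series R := fun n => if n == 0%N then 1 else 0.
Definition dilate x f : series R := fun n => x ^+ n * f n.
Definition pseries (l : seq R) : series R := fun n => nth 0 l n.
Definition series_poly f (N : nat) : {poly R} := \poly_(i < N.+1) f i.

(* [lin c] is 1 - c z and [quad c] is 1 - c z^2. *)
Definition lin c : series R := pseries [:: 1; - c].
Definition quad c : series R := pseries [:: 1; 0; - c].

Lemma smul_series_poly f g N n :
  (n <= N)%N -> smul f g n = (series_poly f N * series_poly g N)`_n.
Proof.
move=> le_nN; rewrite coefM /smul; apply: eq_bigr => i _.
by rewrite !coef_poly ltnS (leq_trans (leq_ord i)) // ltnS (leq_trans (leq_subr _ _)).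
Qed.

Lemma coefMl_eq (A A' B : {poly R}) n :
  (forall i, (i <= n)%N -> A`_i = A'`_i) -> (A * B)`_n = (A' * B)`_n.
Proof. by move=> eqAA'; rewrite !coefM; apply: eq_bigr => i _; rewrite eqAA' // -ltnS. Qed.

Lemma smulC f g : smul f g = smul g f.
Proof.
apply: functional_extensionality => n.
by rewrite (smul_series_poly f g (leqnn n)) (smul_series_poly g f (leqnn n)) mulrC.
Qed.

Lemma smulA f g h : smul (smul f g) h = smul f (smul g h).
Proof.
apply: functional_extensionality => n.
have series_polyM f1 f2 i : (i <= n)%N ->
    (series_poly (smul f1 f2) n)`_i = (series_poly f1 n * series_poly f2 n)`_i.
  by move=> le_in; rewrite coef_poly ltnS le_in; apply: smul_series_poly.
rewrite (smul_series_poly _ _ (leqnn n)) (coefMl_eq _ (series_polyM f g)).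
rewrite (smul_series_poly f _ (leqnn n)) [in RHS]mulrC.
rewrite (coefMl_eq _ (series_polyM g h)).
by rewrite [in RHS]mulrC mulrA.
Qed.

Lemma smulACA f g h P : smul (smul f g) (smul h P) = smul (smul f h) (smul g P).
Proof. by rewrite !smulA; congr smul; rewrite -!smulA (smulC g h). Qed.

Lemma smul_coef0 f g : smul f g 0%N = f 0%N * g 0%N.
Proof. by rewrite /smul big_ord_recl big_ord0 addr0 subn0. Qed.

Lemma smul_coefS f g n :
  smul f g n.+1 = f 0%N * g n.+1 + \sum_(i < n.+1) f i.+1 * g (n - i)%N.
Proof. by rewrite /smul big_ord_recl subn0. Qed.

Lemma smul_pseries_nil f n : smul (pseries [::]) f n = 0.
Proof. by rewrite /smul big1 // => i _; rewrite /pseries nth_nil mul0r. Qed.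

Lemma smul_pseries_cons a l f n :
  smul (pseries (a :: l)) f n =
  a * f n + (if n is n'.+1 then smul (pseries l) f n' else 0).
Proof.
case: n => [|n]; first by rewrite smul_coef0 addr0.
by rewrite smul_coefS.
Qed.

Lemma smul1s f : smul series1 f = f.
Proof.
apply: functional_extensionality => n.
have -> : series1 = pseries [:: 1] by apply: functional_extensionality => -[|[|k]].
by rewrite smul_pseries_cons mul1r; case: n => [|n]; rewrite ?smul_pseries_nil addr0.
Qed.

Lemma smuls1 f : smul f series1 = f.
Proof. by rewrite smulC smul1s. Qed.

Lemma lin_coef0 c : lin c 0%N = 1.
Proof. by []. Qed.

Lemma quad_coef0 c : quad c 0%N = 1.
Proof. by []. Qed.

Lemma smul_lin0 c f : smul (lin c) f 0%N = f 0%N.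
Proof. by rewrite smul_pseries_cons mul1r addr0. Qed.

Lemma smul_linS c f n : smul (lin c) f n.+1 = f n.+1 - c * f n.
Proof.
by rewrite !smul_pseries_cons; case: n => [|n]; rewrite ?smul_pseries_nil mul1r mulNr addr0.
Qed.

Lemma smul_quad0 c f : smul (quad c) f 0%N = f 0%N.
Proof. by rewrite smul_pseries_cons mul1r addr0. Qed.

Lemma smul_quad1 c f : smul (quad c) f 1%N = f 1%N.
Proof. by rewrite !smul_pseries_cons mul1r mul0r !addr0. Qed.

Lemma smul_quadSS c f n : smul (quad c) f n.+2 = f n.+2 - c * f n.
Proof.
rewrite !smul_pseries_cons mul1r mul0r add0r.
by case: n => [|n]; rewrite ?smul_pseries_nil mulNr addr0.
Qed.

Lemma smul_lin_opp c : smul (lin (- c)) (lin c) = quad (c ^+ 2).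
Proof.
apply: functional_extensionality => -[|[|[|n]]];
  rewrite ?smul_lin0 ?smul_linS /lin /quad /pseries //= ?nth_nil; ring.
Qed.

Lemma smul_linN1 c : smul (lin (-1)) (smul (lin c) (lin 1)) = smul (quad 1) (lin c).
Proof.
by rewrite -smulA (smulC (lin (-1))) smulA smul_lin_opp expr1n smulC.
Qed.

Lemma dilate_smul x f g : dilate x (smul f g) = smul (dilate x f) (dilate x g).
Proof.
apply: functional_extensionality => n; rewrite /dilate /smul mulr_sumr.
by apply: eq_bigr => i _; rewrite mulrACA -exprD subnKC // -ltnS.
Qed.

Lemma dilate_series1 x : dilate x series1 = series1.
Proof. by apply: functional_extensionality => -[|n]; rewrite /dilate /series1 ?mul1r ?mulr0. Qed.

(* [qdiff_eq x P Q f] is the functional equation P(z) f(x z) = Q(z) f(z). *)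
Definition qdiff_eq x P Q f := smul P (dilate x f) = smul Q f.

Lemma qdiff_eq_series1 x P : qdiff_eq x P P series1.
Proof. by rewrite /qdiff_eq dilate_series1. Qed.

Lemma qdiff_eqM x P1 Q1 P2 Q2 f g :
  qdiff_eq x P1 Q1 f -> qdiff_eq x P2 Q2 g ->
  qdiff_eq x (smul P1 P2) (smul Q1 Q2) (smul f g).
Proof. by rewrite /qdiff_eq => ef eg; rewrite dilate_smul smulACA ef eg smulACA. Qed.

Lemma qdiff_eq_smull x S P Q f :
  qdiff_eq x P Q f -> qdiff_eq x (smul S P) (smul S Q) f.
Proof. by rewrite /qdiff_eq => ef; rewrite !smulA ef. Qed.

Lemma qdiff_eq_coefS x P Q f n : P 0%N = 1 -> Q 0%N = 1 -> qdiff_eq x P Q f ->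
  (x ^+ n.+1 - 1) * f n.+1 =
  \sum_(i < n.+1) (Q i.+1 * f (n - i)%N - P i.+1 * (x ^+ (n - i) * f (n - i)%N)).
Proof.
move=> P0 Q0 /(congr1 (fun h => h n.+1)); rewrite !smul_coefS /dilate P0 Q0 !mul1r.
move=> e; apply/eqP.
by rewrite sumrB mulrBl mul1r subr_eq eq_sym addrAC subr_eq e addrC.
Qed.

(* The n-th coefficient of a solution is determined by the earlier ones as long
   as x^n <> 1, the coefficient of f_n in P(z) f(x z) - Q(z) f(z) being x^n - 1. *)
Lemma qdiff_eq_uniq x P Q f g : P 0%N = 1 -> Q 0%N = 1 ->
  (forall n, (0 < n)%N -> x ^+ n != 1) ->
  qdiff_eq x P Q f -> qdiff_eq x P Q g -> f 0%N = g 0%N -> f = g.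
Proof.
move=> P0 Q0 hx ef eg fg0; apply: functional_extensionality => n.
elim/ltn_ind: n => -[// | n] IH.
have hx1 : x ^+ n.+1 - 1 != 0 by rewrite subr_eq0 hx.
apply: (mulfI hx1); rewrite (qdiff_eq_coefS n P0 Q0 ef) (qdiff_eq_coefS n P0 Q0 eg).
by apply: eq_bigr => i _; rewrite IH // ltnS leq_subr.
Qed.

Lemma subst_mono2E f n : subst_mono 1 2 f n = if odd n then 0 else f n./2.
Proof. by rewrite /subst_mono dvdn2 divn2 expr1n mul1r; case: odd. Qed.

Lemma expr_even x n : ~~ odd n -> x ^+ n = (x ^+ 2) ^+ n./2.
Proof. by move=> ev; rewrite -exprM mul2n even_halfK. Qed.

Lemma sum_ord_even n (F : nat -> R) :
  \sum_(k < n.+1) (if odd k then 0 else F k./2) = \sum_(j < n./2.+1) F j.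
Proof.
elim: n => [|n IH]; first by rewrite !big_ord1.
rewrite big_ord_recr /= IH uphalf_half.
case: (boolP (odd n)) => /= _; last by rewrite add0n addr0.
by rewrite add1n [in RHS]big_ord_recr.
Qed.

Lemma smul_subst2l f g n :
  smul (subst_mono 1 2 f) g n = \sum_(j < n./2.+1) f j * g (n - 2 * j)%N.
Proof.
rewrite -(sum_ord_even n (fun j => f j * g (n - 2 * j)%N)) /smul.
apply: eq_bigr => k _.
rewrite subst_mono2E; case: ifP => [_|ev]; first by rewrite mul0r.
by rewrite mul2n even_halfK ?ev.
Qed.

Lemma smul_subst2 f g :
  smul (subst_mono 1 2 f) (subst_mono 1 2 g) = subst_mono 1 2 (smul f g).
Proof.
apply: functional_extensionality => n; rewrite smul_subst2l [RHS]subst_mono2E.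
have odd_sub2 (j : 'I_n./2.+1) : odd (n - 2 * j) = odd n.
  by rewrite oddB ?leq_double_ord_half // mul2n odd_double addbF.
case: ifP => odd_n.
  by apply: big1 => j _; rewrite subst_mono2E odd_sub2 odd_n mulr0.
apply: eq_bigr => j _; rewrite subst_mono2E odd_sub2 odd_n; congr (_ * g _).
by rewrite mul2n {1}(esym (even_halfK (negbT odd_n))) -doubleB doubleK.
Qed.

Lemma dilate_subst2 x f :
  dilate x (subst_mono 1 2 f) = subst_mono 1 2 (dilate (x ^+ 2) f).
Proof.
apply: functional_extensionality => n; rewrite /dilate !subst_mono2E.
by case: ifP => [_|/negbT ev]; rewrite ?mulr0 // (expr_even x ev).
Qed.

Lemma subst_series1 : subst_mono 1 2 series1 = series1.
Proof.
apply: functional_extensionality => -[|[|n]]; rewrite subst_mono2E //=.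
by case: odd.
Qed.

Lemma subst_lin c : subst_mono 1 2 (lin c) = quad c.
Proof.
apply: functional_extensionality => -[|[|[|[|n]]]];
  rewrite subst_mono2E /lin /quad /pseries //=.
by rewrite nth_nil if_same.
Qed.

Lemma qdiff_eq_subst2 x P Q f :
  qdiff_eq (x ^+ 2) P Q f ->
  qdiff_eq x (subst_mono 1 2 P) (subst_mono 1 2 Q) (subst_mono 1 2 f).
Proof. by rewrite /qdiff_eq dilate_subst2 !smul_subst2 => ->. Qed.

Lemma size_recip_seq (a : series R) n : size (recip_seq a n) = n.+1.
Proof. by elim: n => [|n IH] //=; rewrite size_rcons IH. Qed.

Lemma nth_recip_seq (a : series R) n k : (k <= n)%N -> nth 0 (recip_seq a n) k = recip a k.
Proof.
elim: n k => [|n IH] k; first by rewrite leqn0 => /eqP ->.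
rewrite leq_eqVlt => /orP [/eqP -> // | lt_kn].
by rewrite /= nth_rcons size_recip_seq lt_kn; apply: IH.
Qed.

Lemma recipS (a : series R) n :
  recip a n.+1 = - (a 0%N)^-1 * \sum_(k < n.+1) a k.+1 * recip a (n - k)%N.
Proof.
rewrite {1}/recip /= nth_rcons size_recip_seq ltnn eqxx.
by congr (_ * _); apply: eq_bigr => i _; rewrite nth_recip_seq ?leq_subr.
Qed.

Lemma smul_recipr (a : series R) : a 0%N != 0 -> smul a (recip a) = series1.
Proof.
move=> a0; apply: functional_extensionality => -[|n].
  by rewrite smul_coef0 /recip /= mulfV.
by rewrite smul_coefS recipS mulrA mulrN mulfV // mulN1r addNr.
Qed.

End FormalSeries.
Arguments series1 {R}.

Section QSeries.
Variable R : fieldType.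
Implicit Types (a b c x : R).

Lemma qpoch0 x b : qpoch x b 0 = 1.
Proof. by rewrite /qpoch big_ord0. Qed.

Lemma qpochS x b n : qpoch x b n.+1 = qpoch x b n * (1 - b ^+ n * x).
Proof. by rewrite /qpoch big_ord_recr. Qed.

(* [qexp b c] is e_b(c z), [qexp_inv b c] is 1 / e_b(c z) and [qbin_series b a c]
   is the q-binomial series e_b(c z) / e_b(a c z). *)
Definition qexp b c : series R := fun n => c ^+ n / qpoch b b n.
Definition qexp_inv b c : series R :=
  fun n => (-1) ^+ n * b ^+ 'C(n, 2) * c ^+ n / qpoch b b n.
Definition qbin_series b a c : series R := fun n => qpoch a b n / qpoch b b n * c ^+ n.

Lemma subst_mono1_eq_series b c : subst_mono c 1 (eq_series b) = qexp b c.
Proof. by apply: functional_extensionality => n; rewrite /subst_mono dvd1n divn1. Qed.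

Lemma subst_mono2_eq_series b c :
  subst_mono c 2 (eq_series b) = subst_mono 1 2 (qexp b c).
Proof.
apply: functional_extensionality => n; rewrite /subst_mono /qexp expr1n mul1r.
by case: ifP.
Qed.

Lemma rs0 b c : rs 0 c b = 1.
Proof. by rewrite /rs big_ord1 /qbinom /= !qpoch0 expr0 !mulr1 divr1. Qed.

Section NotRootOfUnity.
Variable b : R.
Hypothesis b_not_root1 : forall n, (0 < n)%N -> b ^+ n != 1.

Lemma qpoch_factor_neq0 n : 1 - b ^+ n * b != 0.
Proof. by rewrite -exprSr subr_eq0 eq_sym b_not_root1. Qed.

Lemma qpoch_neq0 n : qpoch b b n != 0.
Proof.
elim: n => [|n IH]; first by rewrite qpoch0 oner_eq0.
by rewrite qpochS mulf_neq0 // qpoch_factor_neq0.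
Qed.

Lemma qexp_qdiff c : qdiff_eq b series1 (lin c) (qexp b c).
Proof.
rewrite /qdiff_eq smul1s; apply: functional_extensionality => -[|n].
  by rewrite smul_lin0 /dilate expr0 mul1r.
rewrite smul_linS /dilate /qexp qpochS !exprS.
by field; rewrite qpoch_neq0 qpoch_factor_neq0.
Qed.

Lemma qexp_inv_qdiff c : qdiff_eq b (lin c) series1 (qexp_inv b c).
Proof.
rewrite /qdiff_eq smul1s; apply: functional_extensionality => -[|n].
  by rewrite smul_lin0 /dilate expr0 mul1r.
rewrite smul_linS /dilate /qexp_inv qpochS binS bin1 exprD !exprS.
by field; rewrite qpoch_neq0 qpoch_factor_neq0.
Qed.

Lemma qbin_series_qdiff a c : qdiff_eq b (lin (a * c)) (lin c) (qbin_series b a c).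
Proof.
apply: functional_extensionality => -[|n].
  by rewrite !smul_lin0 /dilate expr0 mul1r.
rewrite !smul_linS /dilate /qbin_series !qpochS !exprS.
by field; rewrite qpoch_neq0 qpoch_factor_neq0.
Qed.

Lemma qexp_mul_inv c : smul (qexp b c) (qexp_inv b c) = series1.
Proof.
apply: (qdiff_eq_uniq (P := lin c) (Q := lin c) _ _ b_not_root1) => //.
- by have := qdiff_eqM (qexp_qdiff c) (qexp_inv_qdiff c); rewrite smul1s smuls1.
- exact: qdiff_eq_series1.
- by rewrite smul_coef0 /qexp /qexp_inv bin0n !expr0 qpoch0 invr1 !mulr1.
Qed.

Lemma rs_qexp c n : rs n c b / qpoch b b n = smul (qexp b c) (qexp b 1) n.
Proof.
rewrite /rs /smul mulr_suml; apply: eq_bigr => i _.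
rewrite /qbinom -ltnS ltn_ord /qexp expr1n.
by field; rewrite !qpoch_neq0.
Qed.

Lemma qexp_pair_qdiff c :
  qdiff_eq b series1 (smul (lin c) (lin 1)) (smul (qexp b c) (qexp b 1)).
Proof. by have := qdiff_eqM (qexp_qdiff c) (qexp_qdiff 1); rewrite smul1s. Qed.

End NotRootOfUnity.
End QSeries.

Lemma expr_sq_bin2 (R : pzSemiRingType) (x : R) j :
  (x ^+ 2) ^+ 'C(j, 2) * x ^+ j = x ^+ (j ^ 2).
Proof.
rewrite -exprM -exprD; congr (_ ^+ _).
by elim: j => // j IH; rewrite binS bin1; nia.
Qed.

Section RogersSzego.
Variable R : fieldType.
Variables q s : R.
Hypothesis q_not_root1 : forall n, (0 < n)%N -> q ^+ n != 1.
Hypothesis s_neq0 : s != 0.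

Local Notation p := (q ^+ 2).

Lemma sq_not_root1 n : (0 < n)%N -> p ^+ n != 1.
Proof. by move=> n_gt0; rewrite -exprM q_not_root1 // muln_gt0. Qed.

Let qpoch_q_neq0 := qpoch_neq0 q_not_root1.
Let qpoch_p_neq0 := qpoch_neq0 sq_not_root1.

Lemma qpoch_sq n : qpoch p p n = qpoch q q n * qpoch (- q) q n.
Proof.
elim: n => [|n IH]; first by rewrite !qpoch0 mulr1.
by rewrite !qpochS IH exprAC; ring.
Qed.

Lemma qpoch_double n : qpoch q q (2 * n) = qpoch q p n * qpoch p p n.
Proof.
elim: n => [|n IH]; first by rewrite muln0 !qpoch0 mulr1.
have -> : (2 * n.+1 = (2 * n).+2)%N by rewrite mulnS.
have qpow_odd : q ^+ (2 * n).+1 = p ^+ n * q by rewrite exprSr exprM.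
by rewrite !qpochS IH qpow_odd exprM; ring.
Qed.

Lemma qpoch_qsq_neq0 n : qpoch q p n != 0.
Proof. by have := qpoch_q_neq0 (2 * n); rewrite qpoch_double mulf_eq0 negb_or => /andP[]. Qed.

Definition rs_series : series R := fun n => rs n s p / qpoch q q n.

Lemma rs_series_qexp n : rs_series n = qpoch (- q) q n * smul (qexp p s) (qexp p 1) n.
Proof.
have qpoch_negq_neq0 : qpoch (- q) q n != 0.
  by have := qpoch_p_neq0 n; rewrite qpoch_sq mulf_eq0 negb_or => /andP[].
rewrite -(rs_qexp sq_not_root1) /rs_series qpoch_sq.
by field; rewrite qpoch_q_neq0 qpoch_negq_neq0.
Qed.

(* F_n = (-q;q)_n G_n for G = e_{q^2}(sz) e_{q^2}(z), and
   (1 - q^n) F_n = (-q;q)_(n-1) (1 - q^(2n)) G_n turns the recurrence of G, which is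
   solved for (1 - q^(2n)) G_n, into the recurrence of F. *)
Lemma rs_series_qdiff : qdiff_eq q (quad (q * s)) (smul (lin s) (lin 1)) rs_series.
Proof.
set G := smul (qexp p s) (qexp p 1).
have eqG n : dilate p G n = smul (lin s) (smul (lin 1) G) n.
  by have := qexp_pair_qdiff sq_not_root1 s; rewrite /qdiff_eq -/G smul1s smulA => ->.
have rsS n : (1 - q ^+ n.+1) * rs_series n.+1
             = qpoch (- q) q n * ((1 - p ^+ n.+1) * G n.+1).
  by rewrite !rs_series_qexp -/G qpochS exprAC [q ^+ n.+1]exprSr; ring.
have recG1 : (1 - p ^+ 1) * G 1%N = (1 + s) * G 0%N.
  by have := eqG 1%N; rewrite /dilate !smul_linS !smul_lin0 mulrBl mul1r => ->; ring.
have recGSS n : (1 - p ^+ n.+2) * G n.+2 = (1 + s) * G n.+1 - s * G n.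
  by have := eqG n.+2; rewrite /dilate !smul_linS mulrBl mul1r => ->; ring.
rewrite /qdiff_eq smulA; apply: functional_extensionality => -[|[|n]].
- by rewrite smul_quad0 !smul_lin0 /dilate expr0 mul1r.
- rewrite smul_quad1 !smul_linS !smul_lin0 /dilate.
  have -> : q ^+ 1 * rs_series 1%N = rs_series 1%N - (1 - q ^+ 1) * rs_series 1%N by ring.
  by rewrite rsS recG1 (rs_series_qexp 0) -/G qpoch0; ring.
rewrite smul_quadSS !smul_linS /dilate.
have -> : q ^+ n.+2 * rs_series n.+2 = rs_series n.+2 - (1 - q ^+ n.+2) * rs_series n.+2.
  by ring.
by rewrite rsS recGSS (rs_series_qexp n.+1) (rs_series_qexp n) -/G qpochS; ring.
Qed.

Lemma rs_series_coef0 : rs_series 0 = 1.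
Proof. by rewrite /rs_series rs0 qpoch0 divr1. Qed.

Lemma rs_series_mul_qexp :
  smul rs_series (subst_mono 1 2 (qexp p (q * s))) = smul (qexp q s) (qexp q 1).
Proof.
have qexp_sq_qdiff := qdiff_eq_subst2 (qexp_qdiff sq_not_root1 (q * s)).
rewrite subst_series1 subst_lin in qexp_sq_qdiff.
apply: (qdiff_eq_uniq (P := quad (q * s))
          (Q := smul (smul (lin s) (lin 1)) (quad (q * s))) _ _ q_not_root1).
- exact: quad_coef0.
- by rewrite !smul_coef0 lin_coef0 quad_coef0 !mulr1.
- by have := qdiff_eqM rs_series_qdiff qexp_sq_qdiff; rewrite smuls1.
- have := qdiff_eq_smull (quad (q * s)) (qexp_pair_qdiff q_not_root1 s).
  by rewrite smuls1 smulC.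
- by rewrite !smul_coef0 rs_series_coef0 subst_mono2E /qexp /= !(expr0, qpoch0, divr1, mulr1).
Qed.

Lemma qexp_sq_mul_inv :
  smul (subst_mono 1 2 (qexp p (q * s))) (subst_mono 1 2 (qexp_inv p (q * s))) = series1.
Proof. by rewrite smul_subst2 (qexp_mul_inv sq_not_root1) subst_series1. Qed.

Lemma rs_series_eq_inv_mul :
  rs_series = smul (subst_mono 1 2 (qexp_inv p (q * s))) (smul (qexp q s) (qexp q 1)).
Proof. by rewrite -rs_series_mul_qexp smulC smulA qexp_sq_mul_inv smuls1. Qed.

Lemma qbin_sq_qdiff :
  qdiff_eq q (quad (q * s)) (quad 1) (subst_mono 1 2 (qbin_series p (q * s) 1)).
Proof.
have := qdiff_eq_subst2 (qbin_series_qdiff sq_not_root1 (q * s) 1).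
by rewrite mulr1 !subst_lin.
Qed.

Lemma rs_series_eq_qbin :
  rs_series = smul (subst_mono 1 2 (qbin_series p (q * s) 1)) (qbin_series q (- s^-1) s).
Proof.
apply: (qdiff_eq_uniq (P := smul (quad (q * s)) (lin (-1)))
          (Q := smul (quad 1) (lin s)) _ _ q_not_root1).
- by rewrite smul_coef0 lin_coef0 quad_coef0 mulr1.
- by rewrite smul_coef0 lin_coef0 quad_coef0 mulr1.
- have := qdiff_eq_smull (lin (-1)) rs_series_qdiff.
  by rewrite smul_linN1 (smulC (lin (-1))).
- have := qbin_series_qdiff q_not_root1 (- s^-1) s.
  rewrite mulNr mulVf // => T_qdiff.
  exact: qdiff_eqM qbin_sq_qdiff T_qdiff.
- by rewrite smul_coef0 rs_series_coef0 subst_mono2E /qbin_series /= !qpoch0 !expr0 divr1 !mulr1.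
Qed.

Lemma qbin_mul_rs_series :
  smul (qbin_series q (- s) (-1)) rs_series = subst_mono 1 2 (qbin_series p (q * s) 1).
Proof.
apply: (qdiff_eq_uniq (P := smul (lin s) (quad (q * s)))
          (Q := smul (lin s) (quad 1)) _ _ q_not_root1).
- by rewrite smul_coef0 lin_coef0 quad_coef0 mulr1.
- by rewrite smul_coef0 lin_coef0 quad_coef0 mulr1.
- have := qbin_series_qdiff q_not_root1 (- s) (-1).
  rewrite mulrN1 opprK => A_qdiff.
  by have := qdiff_eqM A_qdiff rs_series_qdiff; rewrite smul_linN1 (smulC (quad 1)).
- exact: qdiff_eq_smull qbin_sq_qdiff.
- by rewrite smul_coef0 rs_series_coef0 subst_mono2E /qbin_series /= !qpoch0 !expr0 divr1 !mulr1.
Qed.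

Lemma rs_sq_eq_rs_series n : rs n s p = qpoch q q n * rs_series n.
Proof. by rewrite /rs_series mulrC divfK. Qed.

Lemma rs_sq_gen_coef n :
  rs n s p / qpoch q q n =
  smul (smul (subst_mono s 1 (eq_series q)) (subst_mono 1 1 (eq_series q)))
       (recip (subst_mono (q * s) 2 (eq_series p))) n.
Proof.
rewrite !subst_mono1_eq_series subst_mono2_eq_series -rs_series_mul_qexp smulA.
rewrite smul_recipr ?smuls1 //.
by rewrite subst_mono2E /qexp /= expr0 qpoch0 divr1 oner_neq0.
Qed.

Lemma rs_sq_eq_sum_rs n :
  rs n s p =
  \sum_(j < n./2.+1) (-1) ^+ j * q ^+ (j ^ 2) * qpoch q p j
     * qbinom q n (2 * j) * s ^+ j * rs (n - 2 * j) s q.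
Proof.
rewrite rs_sq_eq_rs_series rs_series_eq_inv_mul smul_subst2l mulr_sumr.
apply: eq_bigr => j _.
rewrite -(rs_qexp q_not_root1) /qexp_inv /qbinom leq_double_ord_half qpoch_double.
rewrite -(expr_sq_bin2 q j) (exprMn j q s).
by field; rewrite !qpoch_q_neq0 qpoch_p_neq0 qpoch_qsq_neq0.
Qed.

Lemma rs_sq_eq_sum_qpoch n :
  rs n s p =
  \sum_(j < n./2.+1) qbinom q n (2 * j) * qpoch q p j
     * qpoch (q * s) p j * s ^+ (n - 2 * j) * qpoch (- s^-1) q (n - 2 * j).
Proof.
rewrite rs_sq_eq_rs_series rs_series_eq_qbin smul_subst2l mulr_sumr.
apply: eq_bigr => j _.
rewrite /qbin_series /qbinom leq_double_ord_half qpoch_double expr1n.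
by field; rewrite !qpoch_q_neq0 qpoch_p_neq0 qpoch_qsq_neq0.
Qed.

Lemma alternating_sum_rs_sq N :
  \sum_(k < N.+1) (-1) ^+ k * qpoch (- s) q k * qbinom q N k * rs (N - k) s p
  = qpoch q q N * subst_mono 1 2 (qbin_series p (q * s) 1) N.
Proof.
rewrite -qbin_mul_rs_series /smul mulr_sumr; apply: eq_bigr => k _.
rewrite rs_sq_eq_rs_series /qbin_series /qbinom -ltnS ltn_ord.
by field; rewrite !qpoch_q_neq0.
Qed.

Lemma alternating_sum_rs_sq_double n :
  \sum_(k < (2 * n).+1) (-1) ^+ k * qpoch (- s) q k * qbinom q (2 * n) k
     * rs (2 * n - k) s p
  = qpoch q p n * qpoch (q * s) p n.
Proof.
rewrite alternating_sum_rs_sq qpoch_double subst_mono2E mul2n odd_double /= doubleK.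
by rewrite /qbin_series expr1n mulr1; field; rewrite qpoch_p_neq0.
Qed.

Lemma alternating_sum_rs_sq_double_add1 n :
  \sum_(k < (2 * n).+2) (-1) ^+ k * qpoch (- s) q k * qbinom q (2 * n).+1 k
     * rs ((2 * n).+1 - k) s p = 0.
Proof. by rewrite alternating_sum_rs_sq subst_mono2E /= mul2n odd_double /= mulr0. Qed.

End RogersSzego.

Lemma qI_not_root1 n : (0 < n)%N -> qI ^+ n != 1.
Proof.
move=> n_gt0; rewrite /qI -tofracXn -tofrac1 tofrac_eq -rmorphXn /= -polyC1.
rewrite (inj_eq polyC_inj); apply/eqP => /(congr1 (fun r : {poly rat} => size r)).
by rewrite size_polyXn size_poly1 => -[] n0; rewrite n0 in n_gt0.
Qed.

Lemma sI_neq0 : sI != 0.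
Proof. by rewrite /sI tofrac_eq0 polyX_eq0. Qed.

Theorem lemma1p3 :
  let q := qI in let s := sI in
  (forall n : nat,
     rs n s (q ^+ 2) / qpoch q q n =
     smul (smul (subst_mono s 1 (eq_series q)) (subst_mono 1 1 (eq_series q)))
          (recip (subst_mono (q * s) 2 (eq_series (q ^+ 2)))) n)
  /\ (forall n : nat,
     rs n s (q ^+ 2) =
     \sum_(j < n./2.+1) (-1) ^+ j * q ^+ (j ^ 2) * qpoch q (q ^+ 2) j
        * qbinom q n (2 * j) * s ^+ j * rs (n - 2 * j) s q)
  /\ (forall n : nat,
     rs n s (q ^+ 2) =
     \sum_(j < n./2.+1) qbinom q n (2 * j) * qpoch q (q ^+ 2) j
        * qpoch (q * s) (q ^+ 2) j * s ^+ (n - 2 * j)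
        * qpoch (- s^-1) q (n - 2 * j))
  /\ (forall n : nat,
     \sum_(k < (2 * n).+1) (-1) ^+ k * qpoch (- s) q k * qbinom q (2 * n) k
        * rs (2 * n - k) s (q ^+ 2)
     = qpoch q (q ^+ 2) n * qpoch (q * s) (q ^+ 2) n)
  /\ (forall n : nat,
     \sum_(k < (2 * n).+2) (-1) ^+ k * qpoch (- s) q k * qbinom q (2 * n).+1 k
        * rs ((2 * n).+1 - k) s (q ^+ 2) = 0).
Proof.
move=> q s; have hq := qI_not_root1.
split; first exact: rs_sq_gen_coef hq.
split; first exact: rs_sq_eq_sum_rs hq.
split; first exact: rs_sq_eq_sum_qpoch hq sI_neq0.
split; first exact: alternating_sum_rs_sq_double hq.
exact: alternating_sum_rs_sq_double_add1 hq.
Qed.
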